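(* Let $s=s_1\cdots s_n$ be a normalized fully ternary string of length $n$ with $s_n=2$ and $s\neq 0212$. Then $d_{\rm s}(s)\le n-2$. (The string $0212$ satisfies $d_{\rm s}(0212)=3$.)
   Context: Strings are finite words over $\{0,1,2,\dots\}$. A string is \emph{normalized} if no two adjacent symbols are equal; the \emph{normalization} of a string replaces every maximal run of identical symbols by a single copy. A string is \emph{fully $k$-ary} if the set of symbols occurring in it is exactly $\{0,\dots,k-1\}$; fully ternary means fully $3$-ary. For a normalized string $s=s_1\cdots s_n$ and $1\le i\le n$, the flip $f^{(i)}(s)$ is the normalization of $s_i\cdots s_1 s_{i+1}\cdots s_n$. The sorting distance $d_{\rm s}(s)$ of a normalized fully $k$-ary string $s$ is the minimum number of flips needed to transform $s$ into $01\cdots(k-1)$. *)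

From mathcomp Require Import all_boot.
Set Implicit Arguments. Unset Strict Implicit. Unset Printing Implicit Defensive.

Fixpoint normalize (s : seq nat) : seq nat :=
  match s with
  | [::] => [::]
  | x :: t =>
      match normalize t with
      | [::] => [:: x]
      | y :: u => if x == y then y :: u else x :: y :: u
      end
  end.

Definition normalized (s : seq nat) : bool := sorted (fun a b => a != b) s.

Definition fully_kary (k : nat) (s : seq nat) : Prop :=
  forall x : nat, (x \in s) = (x < k).

Definition flip (i : nat) (s : seq nat) : seq nat :=
  normalize (rev (take i s) ++ drop i s).

Fixpoint reach_in (k : nat) (s t : seq nat) : Prop :=
  match k with
  | 0 => s = t
  | k'.+1 => exists i : nat, 1 <= i <= size s /\ reach_in k' (flip i s) t
  end.

Definition sorted_string (k : nat) : seq nat := iota 0 k.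

Definition sorting_distance (k : nat) (s : seq nat) (d : nat) : Prop :=
  reach_in d s (sorted_string k) /\
  forall d' : nat, reach_in d' s (sorted_string k) -> d <= d'.

From mathcomp Require Import all_boot zify.

(* If the first symbol x occurs again, s = x u x r, then
   the flip at |u|+1 deletes a symbol: it yields rev(u) x r, which is again normalized,
   fully ternary, ends in 2 and has length n-1.  Otherwise s is x followed by an
   alternating word in the two other symbols, i.e. s has one of the shapes 0(12)^k,
   02(12)^k, 1(02)^k, 12(02)^k, and explicit flip sequences sort these in n-2 flips,
   mostly by flipping again at a repeated first symbol.  Lengths up to 5, where the
   exception 0212 lives, are settled by exhaustive search. *)
Set Implicit Arguments. Unset Strict Implicit. Unset Printing Implicit Defensive.

Lemma normalize_dup x t : normalize (x :: x :: t) = normalize (x :: t).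
Proof. by rewrite /=; case: (normalize t) => [|y u] /=; [|case: eqP => [->|_]]; rewrite eqxx. Qed.

Lemma normalize_catl w t1 t2 :
  normalize t1 = normalize t2 -> normalize (w ++ t1) = normalize (w ++ t2).
Proof. by elim: w => [//|x w IH] /IH /= ->. Qed.

Lemma normalize_id s : normalized s -> normalize s = s.
Proof.
elim: s => [//|x t IH] ns /=; rewrite IH; last exact: path_sorted ns.
by case: t ns {IH} => [//|y u] /= /andP [/negbTE -> _].
Qed.

Lemma normalize_cat_dup w x t :
  normalized (w ++ x :: t) -> normalize (w ++ x :: x :: t) = w ++ x :: t.
Proof. by move=> ns; rewrite (normalize_catl w (normalize_dup x t)) normalize_id. Qed.

Lemma normalized_cat u v : normalized (u ++ v) =
  [&& normalized u, normalized v & (u == [::]) || (v == [::]) || (last 0 u != head 0 v)].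
Proof.
case: u => [|x u] /=; first by case: (normalized v).
rewrite cat_path; case: v => [|y v] /=; first by rewrite !andbT.
by case: (path _ x u); case: (_ != _); case: (path _ y v).
Qed.

Lemma normalized_rev s : normalized (rev s) = normalized s.
Proof.
rewrite /normalized rev_sorted; case: s => //= x s.
by apply: eq_path => a b; rewrite /= eq_sym.
Qed.

Fixpoint alternating (a b n : nat) : seq nat :=
  if n is n'.+1 then a :: alternating b a n' else [::].

Lemma size_alternating a b n : size (alternating a b n) = n.
Proof. by elim: n a b => //= n IH a b; rewrite IH. Qed.

Lemma alternating_rcons a b n :
  alternating a b n.+1 = rcons (alternating a b n) (if odd n then b else a).
Proof.
elim: n a b => [//|n IH] a b.
by rewrite -[LHS]/(a :: alternating b a n.+1) IH /=; case: (odd n).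
Qed.

Lemma last_alternating x a b n :
  last x (alternating a b n.+1) = if odd n then b else a.
Proof. by rewrite alternating_rcons last_rcons. Qed.

Lemma rev_alternating a b n :
  rev (alternating a b n) = if odd n then alternating a b n else alternating b a n.
Proof.
elim: n a b => [//|n IH] a b.
rewrite (rev_cons a (alternating b a n)) IH oddS.
by case: ifP => odd_n; rewrite !alternating_rcons odd_n.
Qed.

Lemma drop_alternating a b m n :
  drop m (alternating a b (m + n)) =
  if odd m then alternating b a n else alternating a b n.
Proof.
elim: m a b => [|m IH] a b; first by rewrite drop0.
by rewrite /= IH; case: (odd m).
Qed.

Lemma normalized_alternating a b n : a != b -> normalized (alternating a b n).
Proof.
elim: n a b => [//|[//|n] IH] a b ab /=.
by rewrite ab; apply: (IH b a); rewrite eq_sym.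
Qed.

Lemma alternating_eq a b t : a != b -> normalized (a :: t) ->
  all (fun z => (z == a) || (z == b)) t -> a :: t = alternating a b (size t).+1.
Proof.
elim: t a b => [//|c t IH] a b ab /= /andP [ac nt] /andP [c_ab t_ab].
have c_b : c = b by move: c_ab; rewrite eq_sym (negbTE ac) => /eqP.
rewrite c_b in nt *; rewrite (IH b a) 1?eq_sym //.
by apply: sub_all t_ab => z; rewrite orbC.
Qed.

Lemma normalized_alternating_cat a b n c r : a != b -> normalized (c :: r) ->
  last 0 (alternating a b n.+1) != c -> normalized (alternating a b n.+1 ++ c :: r).
Proof.
by move=> ab ncr lc; rewrite normalized_cat normalized_alternating // ncr lc !orbT.
Qed.

Lemma flip_cat i w r : size w = i -> flip i (w ++ r) = normalize (rev w ++ r).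
Proof. by move=> <-; rewrite /flip take_size_cat // drop_size_cat. Qed.

Lemma flip_swap a b t : normalized (b :: a :: t) -> flip 2 (a :: b :: t) = b :: a :: t.
Proof. by move=> ns; rewrite (@flip_cat 2 [:: a; b]) // normalize_id. Qed.

Lemma normalized_head_repeat x u r :
  normalized (x :: u ++ x :: r) -> normalized (rev u ++ x :: r).
Proof.
case: u => [|y u]; first by rewrite /normalized /= eqxx.
rewrite -cat1s normalized_cat => /and3P [_ + /= xy].
rewrite normalized_cat => /and3P [nu nr _].
by rewrite normalized_cat normalized_rev nu nr rev_cons last_rcons (eq_sym y) xy !orbT.
Qed.

Lemma flip_head_repeat x u r : normalized (x :: u ++ x :: r) ->
  flip (size u).+1 (x :: u ++ x :: r) = rev u ++ x :: r.
Proof.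
move=> ns; rewrite (@flip_cat _ (x :: u)) //.
by rewrite rev_cons cat_rcons normalize_cat_dup // normalized_head_repeat.
Qed.

Fixpoint reach_inb (k : nat) (s t : seq nat) : bool :=
  if k is k'.+1 then has (fun i => reach_inb k' (flip i s) t) (iota 1 (size s))
  else s == t.

Lemma reach_inP k s t : reflect (reach_in k s t) (reach_inb k s t).
Proof.
elim: k s => [|k IH] s /=; first exact: eqP.
apply: (iffP hasP) => [[i] | [i [i_s /IH s_t]]].
  by rewrite mem_iota add1n ltnS => i_s /IH; exists i.
by exists i; rewrite // mem_iota add1n ltnS.
Qed.

Lemma reach_in_add m n s t u :
  reach_in m s t -> reach_in n t u -> reach_in (m + n) s u.
Proof.
elim: m s => [|m IH] s /=; first by move->.
by move=> [i [i_s s_t]] t_u; exists i; split; last exact: IH s_t t_u.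
Qed.

Lemma exists_sorting_distance k s m : reach_in m s (sorted_string k) ->
  exists d, sorting_distance k s d /\ d <= m.
Proof.
move=> s_m; have ex : exists j, reach_inb j s (sorted_string k).
  by exists m; apply/reach_inP.
case: (ex_minnP ex) => d /reach_inP s_d d_min.
exists d; split; last exact/d_min/reach_inP.
by split=> // d' /reach_inP /d_min.
Qed.

Lemma reach_collapse_alternating a b m r :
  normalized (alternating a b m.+2 ++ r) ->
  reach_in m (alternating a b m.+2 ++ r) (drop m (alternating a b m.+2) ++ r).
Proof.
elim: m a b => [//|m IH] a b ns; exists 2; split=> //.
rewrite (@flip_head_repeat a [:: b] (alternating b a m ++ r) ns).
exact: IH (path_sorted ns).
Qed.

Lemma reach_collapse_1_alternating c d m :
  normalized (c :: 1 :: alternating d c m.+1) ->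
  reach_in m (c :: 1 :: alternating d c m.+1)
    (if odd m then [:: d; 1; c] else [:: c; 1; d]).
Proof.
elim: m c d => [//|m IH] c d ns; exists 3; split=> //.
have {}ns : normalized (c :: [:: 1; d] ++ c :: alternating d c m) by [].
rewrite (flip_head_repeat ns) oddS.
by case: (odd m) (IH d c (normalized_head_repeat ns)).
Qed.

Lemma reach_sorted_alternating12_02 m : odd m ->
  reach_in m.+1 (alternating 1 2 m.+2 ++ [:: 0; 2]) (sorted_string 3).
Proof.
move=> odd_m; rewrite -[X in reach_in X]addn1.
have ns : normalized (alternating 1 2 m.+2 ++ [:: 0; 2]).
  by apply: normalized_alternating_cat; rewrite // last_alternating; case: ifP.
apply: reach_in_add (reach_collapse_alternating ns) _.
by rewrite -[m.+2]addn2 drop_alternating odd_m; exists 3.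
Qed.

Lemma reach_sorted_0_alternating12 n : odd n -> 1 < n ->
  reach_in n (0 :: alternating 1 2 n.+1) (sorted_string 3).
Proof.
case: n => [|[|m]] // /[!oddS] /negbNE odd_m _.
exists m.+3; split; first by rewrite /= size_alternating.
have -> : 0 :: alternating 1 2 m.+3 = (0 :: alternating 1 2 m.+2) ++ [:: 2].
  by rewrite alternating_rcons -cats1 /= negbK odd_m.
rewrite flip_cat; last by rewrite /= size_alternating.
rewrite rev_cons rev_alternating /= negbK odd_m cat_rcons.
rewrite normalize_id; first exact: reach_sorted_alternating12_02.
by apply: normalized_alternating_cat; rewrite // last_alternating /= odd_m.
Qed.

Lemma reach_sorted_0_alternating21 n : ~~ odd n -> 2 < n ->
  reach_in n (0 :: alternating 2 1 n.+1) (sorted_string 3).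
Proof.
case: n => [|[|[|m]]] // /[!oddS] /negbNE /negbNE odd_m _.
exists 2; split=> //; rewrite (@flip_swap 0 2 (alternating 1 2 m.+3)); last first.
  by rewrite (normalized_cat [:: 2; 0]) normalized_alternating.
exists m.+4; split; first by rewrite /= size_alternating.
have -> : 2 :: 0 :: alternating 1 2 m.+3 = (2 :: 0 :: alternating 1 2 m.+2) ++ [:: 2].
  by rewrite alternating_rcons -cats1 /= negbK odd_m.
rewrite flip_cat; last by rewrite /= size_alternating.
rewrite (rev_cons 2) (rev_cons 0) rev_alternating !oddS negbK odd_m.
rewrite cat_rcons normalize_cat_dup -cats1 -catA.
  exact: reach_sorted_alternating12_02.
by apply: normalized_alternating_cat; rewrite // last_alternating; case: ifP.
Qed.

Lemma reach_sorted_1_alternating02 n : odd n ->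
  reach_in n (1 :: alternating 0 2 n.+1) (sorted_string 3).
Proof.
case: n => [//|m] /[!oddS] /negbTE even_m; exists 2; split=> //.
have ns : normalized (0 :: 1 :: alternating 2 0 m.+1).
  by rewrite (normalized_cat [:: 0; 1]) normalized_alternating.
by rewrite flip_swap //; have := reach_collapse_1_alternating ns; rewrite even_m.
Qed.

Lemma reach_sorted_1_alternating20 n : ~~ odd n -> 0 < n ->
  reach_in n (1 :: alternating 2 0 n.+1) (sorted_string 3).
Proof.
case: n => [//|m] /[!oddS] /negbNE odd_m _; exists 2; split=> //.
have ns : normalized (2 :: 1 :: alternating 0 2 m.+1).
  by rewrite (normalized_cat [:: 2; 1]) normalized_alternating.
by rewrite flip_swap //; have := reach_collapse_1_alternating ns; rewrite odd_m.
Qed.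

Lemma reach_sorted_head_unique x t :
  normalized (x :: t) -> fully_kary 3 (x :: t) -> x \notin t -> last x t = 2 ->
  4 < size t -> reach_in (size t).-1 (x :: t) (sorted_string 3).
Proof.
case: t => [//|a t] ns full x_t lst t_gt4.
have lt3 z : z \in x :: a :: t -> z < 3 by rewrite full.
have x_lt3 : x < 3 by apply: lt3; rewrite mem_head.
have a_lt3 : a < 3 by apply: lt3; rewrite !inE eqxx orbT.
have x_a : x != a by case/andP: ns.
have x_2 : x != 2 by apply: contraNneq x_t => ->; rewrite -lst; exact: mem_last.
have alt_t : a :: t = alternating a (3 - x - a) (size t).+1.
  apply: alternating_eq; [lia | exact: path_sorted ns |].
  apply/allP => z z_t; have z_lt3 : z < 3 by apply: lt3; rewrite !inE z_t !orbT.
  have z_x : z != x by apply: (memPn x_t); rewrite inE z_t orbT.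
  lia.
rewrite alt_t last_alternating in lst; rewrite /= alt_t.
case: x a x_lt3 a_lt3 x_a x_2 lst t_gt4 {ns full x_t lt3 alt_t}
  => [|[|[|x]]] [|[|[|a]]] //= _ _ _ _ lst t_gt4.
- by apply: reach_sorted_0_alternating12; [move: lst; case: odd | lia].
- by apply: reach_sorted_0_alternating21; [move: lst; case: odd | lia].
- by apply: reach_sorted_1_alternating02; move: lst; case: odd.
- by apply: reach_sorted_1_alternating20; [move: lst; case: odd | lia].
Qed.

Definition fully_karyb (k : nat) (s : seq nat) : bool :=
  all (fun x => x < k) s && all (fun x => x \in s) (iota 0 k).

Lemma fully_karyP k s : reflect (fully_kary k s) (fully_karyb k s).
Proof.
apply: (iffP andP) => [[/allP s_lt /allP s_all] x | full].
  apply/idP/idP => [/s_lt // | x_lt]; apply: s_all.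
  by rewrite mem_iota.
by split; apply/allP => x; rewrite ?mem_iota full.
Qed.

Fixpoint words (k n : nat) : seq (seq nat) :=
  if n is n'.+1 then [seq x :: w | x <- iota 0 k, w <- words k n'] else [:: [::]].

Lemma mem_words k s : all (fun x => x < k) s -> s \in words k (size s).
Proof.
elim: s => [//|x s IH] /= /andP [x_lt s_lt].
by apply: allpairs_f; [rewrite mem_iota | exact: IH].
Qed.

Definition small_case_ok (s : seq nat) : bool :=
  [&& normalized s, fully_karyb 3 s, last 0 s == 2 & s != [:: 0; 2; 1; 2]] ==>
  has (fun d => reach_inb d s (sorted_string 3)) (iota 0 (size s).-1).

Lemma small_cases_ok : all (fun n => all small_case_ok (words 3 n)) (iota 0 6).
Proof. by vm_compute. Qed.

Lemma reach_sorted_small s : size s <= 5 ->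
  normalized s -> fully_kary 3 s -> last 0 s = 2 -> s != [:: 0; 2; 1; 2] ->
  exists2 d, d <= size s - 2 & reach_in d s (sorted_string 3).
Proof.
move=> s_le5 ns /fully_karyP full ls s_ne.
have s_words : s \in words 3 (size s) by apply: mem_words; case/andP: full.
move/allP: small_cases_ok => /(_ (size s)); rewrite mem_iota ltnS => /(_ s_le5).
move=> /allP /(_ s s_words); rewrite /small_case_ok ns full ls eqxx s_ne /=.
by case/hasP=> d; rewrite mem_iota => d_lt /reach_inP; exists d => //; lia.
Qed.

Lemma reach_sorted_within s :
  normalized s -> fully_kary 3 s -> last 0 s = 2 -> s != [:: 0; 2; 1; 2] ->
  exists2 d, d <= size s - 2 & reach_in d s (sorted_string 3).
Proof.
have [n] := ubnP (size s); elim: n s => // n IH s /ltnSE s_le ns full ls s_ne.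
have [s_le5 | s_gt5] := leqP (size s) 5; first exact: reach_sorted_small.
case: s s_le ns full ls s_ne s_gt5 => [//|x t] s_le ns full ls _ s_gt5.
have [x_t | x_t] := boolP (x \in t); last first.
  exists (size t).-1; first by rewrite /=; lia.
  by apply: reach_sorted_head_unique.
case/splitPr: x_t ns full ls s_le s_gt5 => u r ns full ls s_le s_gt5.
have size_s : size (x :: u ++ x :: r) = (size u + size r).+2.
  by rewrite /= size_cat /= addnS.
have size_s' : size (rev u ++ x :: r) = (size u + size r).+1.
  by rewrite size_cat size_rev /= addnS.
have [d d_le reach_d] : exists2 d, d <= size (rev u ++ x :: r) - 2 &
    reach_in d (rev u ++ x :: r) (sorted_string 3).
  apply: IH (normalized_head_repeat ns) _ _ _.
  - by move: s_le; rewrite size_s size_s'; lia.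
  - move=> z; rewrite -full !(mem_cat, inE, mem_rev).
    by case: (z == x); rewrite /= ?orbT.
  - by rewrite last_cat -ls /= last_cat.
  - by apply: contraTneq s_gt5 => /(congr1 size); rewrite size_s size_s' => -[->].
exists d.+1; first by move: d_le s_gt5; rewrite size_s size_s'; lia.
by exists (size u).+1; rewrite flip_head_repeat // size_s; split; first lia.
Qed.

Theorem lemma4p2 (s : seq nat) :
  normalized s -> fully_kary 3 s -> last 0 s = 2 -> s != [:: 0; 2; 1; 2] ->
  exists d : nat, sorting_distance 3 s d /\ d <= size s - 2.
Proof.
move=> ns full ls s_ne.
have [m m_le reach_m] := reach_sorted_within ns full ls s_ne.
have [d [dist_d d_le]] := exists_sorting_distance reach_m.
by exists d; split; last exact: leq_trans m_le.
Qed.
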